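(* Let $G=(m,n,\boldsymbol{c},\boldsymbol{d},r_{\max},r_{\min})$ be an interbank lending game, and let $\Phi:\boldsymbol{S}\to\mathbb{R}$ be defined by $$\Phi(\boldsymbol{s})=\sum_{j\in B}\sum_{i\in L}\bigl(r_j(\boldsymbol{s},i)-r_{\min}\bigr)s_{ij},\qquad r_j(\boldsymbol{s},z)=(r_{\min}-r_{\max})\frac{\sum_{i=1}^{z}s_{ij}}{d_j}+r_{\max}.$$ Then $G$ is an exact potential game with potential function $\Phi$, i.e. for every lender $k\in L$, all $s_k,s_k'\in S_k$ and all $\boldsymbol{s}_{-k}\in\boldsymbol{S}_{-k}$, $$\Phi(s_k',\boldsymbol{s}_{-k})-\Phi(s_k,\boldsymbol{s}_{-k})=u_k(s_k',\boldsymbol{s}_{-k})-u_k(s_k,\boldsymbol{s}_{-k}).$$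
   Context: An interbank lending game $G=(m,n,\boldsymbol{c},\boldsymbol{d},r_{\max},r_{\min})$ consists of positive integers $m,n$, budgets $\boldsymbol{c}=(c_1,\dots,c_m)\in\mathbb{R}_{>0}^m$, demands $\boldsymbol{d}=(d_1,\dots,d_n)\in\mathbb{R}_{>0}^n$ and reals $0<r_{\min}<r_{\max}$. The players are the lenders $L=\{1,\dots,m\}$; $B=\{1,\dots,n\}$ is the set of borrowers. Lender $i$'s strategy set is $S_i=\{s_i=(s_{i1},\dots,s_{in})\in\mathbb{R}_{\ge0}^n:\sum_{j\in B}s_{ij}\le c_i\}$, the strategy space is $\boldsymbol{S}=\prod_{i\in L}S_i$, a strategy profile is $\boldsymbol{s}=(s_{ij})_{i\in L,j\in B}\in\boldsymbol{S}$, $\boldsymbol{s}_{-i}$ denotes the strategies of all lenders other than $i$, $\boldsymbol{S}_{-i}=\prod_{k\ne i}S_k$, and $(s_i',\boldsymbol{s}_{-i})$ is the profile where $i$ plays $s_i'$ and the others play as in $\boldsymbol{s}_{-i}$. The interest rate of borrower $j$ is $r_j(\boldsymbol{s})=(r_{\min}-r_{\max})\frac{\sum_{i\in L}s_{ij}}{d_j}+r_{\max}$, and lender $i$'s utility is $u_i(\boldsymbol{s})=\sum_{j\in B}(r_j(\boldsymbol{s})-r_{\min})s_{ij}$. *)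

(* Lenders are 'I_m (lender i+1 of the paper is index i),
   borrowers are 'I_n. A strategy profile is s : 'I_m -> 'I_n -> R,
   s i j = amount lender i lends to borrower j. *)
From mathcomp Require Import all_boot all_order all_algebra.
Set Implicit Arguments. Unset Strict Implicit. Unset Printing Implicit Defensive.
Import Order.TTheory GRing.Theory Num.Theory.
Local Open Scope ring_scope.

Section Game.
Variables (R : realFieldType) (m n : nat).

Definition in_strategy_set (c : 'I_m -> R) (i : 'I_m) (si : 'I_n -> R) : Prop :=
  (forall j, 0 <= si j) /\ \sum_(j < n) si j <= c i.

Definition in_profile_space (c : 'I_m -> R) (s : 'I_m -> 'I_n -> R) : Prop :=
  forall i, in_strategy_set c i (s i).

(* s_{-k} in S_{-k}: all lenders other than k play feasible strategies
   (the k-th row of s is irrelevant, it is overwritten by deviate) *)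
Definition in_others_space (c : 'I_m -> R) (k : 'I_m) (s : 'I_m -> 'I_n -> R) : Prop :=
  forall i, i != k -> in_strategy_set c i (s i).

Definition deviate (s : 'I_m -> 'I_n -> R) (k : 'I_m) (sk : 'I_n -> R)
  : 'I_m -> 'I_n -> R :=
  fun i => if i == k then sk else s i.

Definition rate (d : 'I_n -> R) (rmax rmin : R) (s : 'I_m -> 'I_n -> R)
  (j : 'I_n) : R :=
  (rmin - rmax) * ((\sum_(i < m) s i j) / d j) + rmax.

Definition utility (d : 'I_n -> R) (rmax rmin : R) (s : 'I_m -> 'I_n -> R)
  (i : 'I_m) : R :=
  \sum_(j < n) (rate d rmax rmin s j - rmin) * s i j.

(* r_j(s, z) for lender z (paper's z = val z + 1): sum over lenders 1..z *)
Definition rate_upto (d : 'I_n -> R) (rmax rmin : R) (s : 'I_m -> 'I_n -> R)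
  (j : 'I_n) (z : 'I_m) : R :=
  (rmin - rmax) * ((\sum_(i < m | (val i <= val z)%N) s i j) / d j) + rmax.

Definition potential (d : 'I_n -> R) (rmax rmin : R) (s : 'I_m -> 'I_n -> R) : R :=
  \sum_(j < n) \sum_(i < m) (rate_upto d rmax rmin s j i - rmin) * s i j.

End Game.

(* Summing the prefix products s_{i'j} s_{ij} (i' <= i) over i counts every
   unordered pair of lenders once and every diagonal term once more, so the
   j-th column of the potential equals
   (r_min - r_max)/(2 d_j) (T_j^2 + sum_i s_ij^2) + (r_max - r_min) T_j,
   with T_j the total lent to j.  This is symmetric in the lenders; writing
   T_j = O_j + s_kj with O_j the amount lent by the others, its dependence on
   s_kj is (r_min - r_max)/d_j (O_j s_kj + s_kj^2) + (r_max - r_min) s_kj,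
   which is exactly the j-th term of u_k. *)
From mathcomp Require Import all_boot all_order all_algebra.
From mathcomp Require Import ring.
Import Order.TTheory GRing.Theory Num.Theory.
Local Open Scope ring_scope.

Lemma sum_prefix_mulr {R : comPzRingType} {m : nat} (f : 'I_m -> R) :
  (\sum_(i < m) (\sum_(i' < m | (val i' <= val i)%N) f i') * f i) *+ 2
  = (\sum_(i < m) f i) ^+ 2 + \sum_(i < m) f i ^+ 2.
Proof.
pose below (i : 'I_m) := \sum_(i' < m | (val i' < val i)%N) f i' * f i.
have prefix_split i :
    (\sum_(i' < m | (val i' <= val i)%N) f i') * f i = below i + f i ^+ 2.
  rewrite mulr_suml (bigD1 i) //= addrC expr2; congr (_ + _).
  by apply: eq_bigl => i'; rewrite ltn_neqAle andbC val_eqE.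
have row_split i : (\sum_(i' < m) f i') * f i
    = below i + f i ^+ 2 + \sum_(i' < m | (val i < val i')%N) f i' * f i.
  rewrite (bigID (fun i' : 'I_m => (val i' <= val i)%N)) /= mulrDl.
  rewrite prefix_split mulr_suml; congr (_ + _).
  by apply: eq_bigl => i'; rewrite -ltnNge.
have above_below : \sum_(i < m) \sum_(i' < m | (val i < val i')%N) f i' * f i
    = \sum_(i < m) below i.
  rewrite (exchange_big_dep xpredT) //=.
  by apply: eq_bigr => i _; apply: eq_bigr => i' _; rewrite mulrC.
rewrite (eq_bigr _ (fun i _ => prefix_split i)) expr2 mulr_sumr.
rewrite (eq_bigr _ (fun i _ => row_split i)) !big_split /= above_below.
by rewrite mulr2n; ring.
Qed.

Lemma potentialE (R : realFieldType) (m n : nat) (d : 'I_n -> R)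
    (rmax rmin : R) (t : 'I_m -> 'I_n -> R) :
  potential d rmax rmin t = \sum_(j < n)
    ((rmin - rmax) / d j
       * ((\sum_(i < m) t i j) ^+ 2 + \sum_(i < m) t i j ^+ 2) / 2
     + (rmax - rmin) * \sum_(i < m) t i j).
Proof.
apply: eq_bigr => j _.
rewrite -(sum_prefix_mulr (fun i => t i j)) -mulr_natr.
have -> : \sum_(i < m) (rate_upto d rmax rmin t j i - rmin) * t i j
    = (rmin - rmax) / d j
        * \sum_(i < m) (\sum_(i' < m | (val i' <= val i)%N) t i' j) * t i j
      + (rmax - rmin) * \sum_(i < m) t i j.
  rewrite !mulr_sumr -big_split /=; apply: eq_bigr => i _.
  by rewrite /rate_upto; ring.
by rewrite mulrA mulfK ?pnatr_eq0.
Qed.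

Lemma sum_deviate {R : realFieldType} {m n : nat} {V : nmodType}
    (F : ('I_n -> R) -> V) (s : 'I_m -> 'I_n -> R) (k : 'I_m) (x : 'I_n -> R) :
  \sum_(i < m) F (deviate s k x i) = \sum_(i < m | i != k) F (s i) + F x.
Proof.
rewrite (bigD1 k) //= /deviate eqxx addrC; congr (_ + _).
by apply: eq_bigr => i /negbTE ->.
Qed.

Theorem theorem2p1 (R : realFieldType) (m n : nat)
  (c : 'I_m -> R) (d : 'I_n -> R) (rmax rmin : R)
  (hm : (0 < m)%N) (hn : (0 < n)%N)
  (hc : forall i, 0 < c i) (hd : forall j, 0 < d j)
  (hr0 : 0 < rmin) (hr : rmin < rmax) :
  forall (k : 'I_m) (sk sk' : 'I_n -> R) (s : 'I_m -> 'I_n -> R),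
    in_strategy_set c k sk -> in_strategy_set c k sk' ->
    in_others_space c k s ->
    potential d rmax rmin (deviate s k sk') - potential d rmax rmin (deviate s k sk)
    = utility d rmax rmin (deviate s k sk') k - utility d rmax rmin (deviate s k sk) k.
Proof.
move=> k sk sk' s _ _ _.
rewrite !potentialE /utility /rate -!sumrB; apply: eq_bigr => j _.
rewrite !(sum_deviate (fun r => r j)) !(sum_deviate (fun r => r j ^+ 2)).
rewrite /deviate eqxx.
have dj_neq0 : d j != 0 by rewrite gt_eqF.
by field.
Qed.
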